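(* Let $f\in\mathcal{R}$ be nonzero and suppose that for every integer $p\ge2$ there is $\lambda_p\neq0$ with $U_pf=\lambda_pf$. Then all poles of $f$ equal $1$ (i.e. the level of $f$ is $L=1$), and \[f(x)=C\,\Big(x\frac{d}{dx}\Big)^k\Big(\frac{1}{1-x}\Big)\] for some $k\in\mathbb{N}=\{0,1,2,\dots\}$ and $C\in\mathbb{C}$. Consequently $\lambda_p=p^k$ for every $p$.
   Context: $\mathcal{R}$ denotes the real vector space of rational functions $f(x)=A(x)/B(x)$ with $A,B\in\mathbb{R}[x]$, $B(0)\neq 0$ and $\deg A<\deg B$. For $f\in\mathcal{R}$ with Taylor expansion $f(x)=\sum_{n\ge0}a_nx^n$ at $0$ and a positive integer $p$, the Hecke operator $U_p$ is defined by $U_pf(x)=\sum_{n\ge 0}a_{pn}x^n$. If all poles of $f$ are roots of unity, the level of $f$ is the least common multiple of the orders of these roots of unity. *)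

From mathcomp Require Import all_boot all_algebra all_reals.
From mathcomp Require Export complex.
Set Implicit Arguments. Unset Strict Implicit. Unset Printing Implicit Defensive.
Import GRing.Theory Num.Theory.
Local Open Scope ring_scope.

Section RatFun.
Variable R : realType.

(* A rational function f = A/B in the space \mathcal{R} is represented by the
   pair of polynomials (A, B) with B.[0] != 0 and deg A < deg B.            *)

(* First n+1 Taylor coefficients at 0 of A/B (B.[0] != 0), computed from
   A = B * (\sum_n a_n x^n), i.e. \sum_{i<=n} B_i a_{n-i} = A_n.            *)
Fixpoint taylor_seq (A B : {poly R}) (n : nat) : seq R :=
  if n is m.+1 then
    let s := taylor_seq A B m in
    rcons s ((A`_n - \sum_(i < n) B`_(n - i) * s`_i) / B`_0)
  else [:: A`_0 / B`_0].

Definition taylor (A B : {poly R}) (n : nat) : R := (taylor_seq A B n)`_n.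

(* The operator x d/dx on rational functions given as (numerator, denominator):
   x (A/B)' = x (A' B - A B') / B^2. *)
Definition theta (f : {poly R} * {poly R}) : {poly R} * {poly R} :=
  ('X * (f.1^`() * f.2 - f.1 * f.2^`()), f.2 ^+ 2).

Definition theta_geom (k : nat) : {poly R} * {poly R} :=
  iter k theta (1, 1 - 'X).

Definition is_pole (A B : {poly R}) (z : R[i]) : bool :=
  root (map_poly (real_complex R) (B %/ gcdp A B)) z.

End RatFun.

From HB Require Import structures.
From mathcomp Require Import all_boot all_algebra all_reals.
From mathcomp Require Import complex.
From mathcomp Require Import zify ring.
From Stdlib Require Import Classical.
Set Implicit Arguments. Unset Strict Implicit. Unset Printing Implicit Defensive.
Import GRing.Theory Num.Theory.
Local Open Scope ring_scope.

(* The Taylor coefficients [t n] of [A/B] obey the linear recurrence whose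
   characteristic polynomial is the reciprocal of [B].  Over [R[i]], the roots
   of the minimal annihilating polynomial of [t] are nonzero, and the relation
   [t (p * n) = lambda p * t n] makes every such root a [p]-th power of another
   one, for every [p >= 2]; a finite set with this property is [{1}].  Hence
   [('X - 1)^r] annihilates [t], i.e. [t n = P(n)] for a polynomial [P], and
   [P(2x) = lambda 2 * P(x)] forces [P = c X^k].  Since [n^k] is also the
   coefficient sequence of [(x d/dx)^k (1/(1-x))], whose denominator is a power
   of [1 - x], both series coincide up to [c] and all poles of [A/B] are [1]. *)

Section Expansion.
Variable F : fieldType.
Implicit Types (N D p q r : {poly F}) (s t : nat -> F).

(* [N = D * \sum_n s n x^n] as formal power series. *)
Definition expands N D s := forall n, N`_n = \sum_(i < n.+1) D`_i * s (n - i)%N.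

Definition eq_upto n p q := forall j, (j <= n)%N -> p`_j = q`_j.

Lemma eq_upto_mulr n p q r : eq_upto n p q -> eq_upto n (p * r) (q * r).
Proof.
move=> pq j le_jn; rewrite !coefM; apply: eq_bigr => i _; rewrite pq //.
by have := ltn_ord i; lia.
Qed.

Lemma eq_upto_sub n p q p' q' :
  eq_upto n p q -> eq_upto n p' q' -> eq_upto n (p - p') (q - q').
Proof. by move=> pq pq' j le_jn; rewrite !coefB pq ?pq'. Qed.

Lemma eq_upto_Xderiv n p q : eq_upto n p q -> eq_upto n ('X * p^`()) ('X * q^`()).
Proof. by move=> pq [|j] le_jn; rewrite !coefXM //= !coef_deriv pq. Qed.

Definition trunc_series s n : {poly F} := \poly_(i < n.+1) s i.

Lemma expands_eq_upto N D s n : expands N D s -> eq_upto n N (D * trunc_series s n).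
Proof.
move=> NDs j le_jn; rewrite NDs coefM; apply: eq_bigr => i _; rewrite coef_poly.
by rewrite ltnS (leq_trans (leq_subr _ _) le_jn).
Qed.

Lemma expands_trunc N D s :
  (forall n, N`_n = (D * trunc_series s n)`_n) -> expands N D s.
Proof.
move=> NDs n; rewrite NDs coefM; apply: eq_bigr => i _.
by rewrite coef_poly ltnS leq_subr.
Qed.

Lemma eq_expands N D s t : expands N D s -> s =1 t -> expands N D t.
Proof. by move=> NDs st n; rewrite NDs; apply: eq_bigr => i _; rewrite st. Qed.

Lemma expands_cross N1 D1 N2 D2 s :
  expands N1 D1 s -> expands N2 D2 s -> N1 * D2 = N2 * D1.
Proof.
move=> NDs1 NDs2; apply/polyP => n; set S := trunc_series s n.
rewrite (eq_upto_mulr D2 (expands_eq_upto (n := n) NDs1)) //.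
rewrite (eq_upto_mulr D1 (expands_eq_upto (n := n) NDs2)) //.
by suff -> : D1 * S * D2 = D2 * S * D1 by []; ring.
Qed.

Lemma expandsZ N D s c : expands N D s -> expands (c *: N) D (fun n => c * s n).
Proof.
by move=> NDs n; rewrite coefZ NDs mulr_sumr; apply: eq_bigr => i _; rewrite mulrCA.
Qed.

Lemma expands_Xderiv N D s : expands N D s ->
  expands ('X * (N^`() * D - N * D^`())) (D ^+ 2) (fun n => n%:R * s n).
Proof.
move=> NDs; apply: expands_trunc => n; set S := trunc_series s n.
have -> : trunc_series (fun i => i%:R * s i) n = 'X * S^`().
  apply/polyP => -[|j]; rewrite coef_poly coefXM ?mul0r //=.
  rewrite coef_deriv coef_poly; case: ifP => _; last by rewrite mul0rn.
  by rewrite mulr_natl.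
have -> : 'X * (N^`() * D - N * D^`()) = 'X * N^`() * D - N * ('X * D^`()) by ring.
have NS := expands_eq_upto (n := n) NDs; rewrite -/S in NS.
rewrite (eq_upto_sub (eq_upto_mulr D (eq_upto_Xderiv NS)) (eq_upto_mulr _ NS)) //.
by suff -> : 'X * (D * S)^`() * D - D * S * ('X * D^`()) = D ^+ 2 * ('X * S^`())
  by []; rewrite derivM; ring.
Qed.

Lemma expands_geom : expands 1 (1 - 'X) (fun=> 1).
Proof.
case=> [|n]; first by rewrite big_ord1 !coefE /= mulr1 subr0.
rewrite !big_ord_recl big1 => [|i _]; last by rewrite coefB coefC coefX /= subrr mul0r.
by rewrite !coefE /= !mulr1 addr0 sub0r subr0 subrr.
Qed.

End Expansion.

Lemma sum_ord_widen0 (V : nmodType) m M (F : nat -> V) :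
  (m <= M)%N -> (forall i, (m <= i)%N -> F i = 0) ->
  \sum_(i < m) F i = \sum_(i < M) F i.
Proof.
move=> le_mM F0; rewrite (big_ord_widen M F le_mM) big_mkcond /=.
by apply: eq_bigr => i _; case: ltnP => // /F0 ->.
Qed.

Section Annihilator.
Variables (F : fieldType) (a : nat -> F).
Implicit Types (g h : {poly F}).

(* [pairing g = (g(E) a)_0], where [E] is the shift operator on sequences. *)
Definition pairing g := \sum_(i < size g) g`_i * a i.

Lemma pairingE m g : (size g <= m)%N -> pairing g = \sum_(i < m) g`_i * a i.
Proof.
move=> le_gm; apply: (sum_ord_widen0 (F := fun i => g`_i * a i)) => // i le_gi.
by rewrite nth_default ?mul0r.
Qed.

Fact pairingZ c g : pairing (c *: g) = c * pairing g.
Proof.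
rewrite (pairingE (size_scale_leq c g)) /pairing mulr_sumr.
by apply: eq_bigr => i _; rewrite coefZ mulrA.
Qed.

Fact pairingD g h : pairing (g + h) = pairing g + pairing h.
Proof.
pose m := maxn (size g) (size h).
rewrite !(pairingE (m := m)) ?leq_maxl ?leq_maxr ?(leq_trans (size_polyD _ _)) //.
by rewrite -big_split; apply: eq_bigr => i _; rewrite coefD mulrDl.
Qed.

HB.instance Definition _ :=
  GRing.isSemilinear.Build F {poly F} F _ pairing (pairingZ, pairingD).

Lemma pairingXn n : pairing 'X^n = a n.
Proof.
rewrite /pairing size_polyXn big_ord_recr /= big1 ?add0r => [|i _].
  by rewrite coefXn eqxx mul1r.
by rewrite coefXn ltn_eqF ?mul0r.
Qed.

Lemma pairingXnM n m g : (size g <= m)%N ->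
  pairing ('X^n * g) = \sum_(i < m) g`_i * a (n + i).
Proof.
move=> le_gm; rewrite -[g in LHS]coefK poly_def mulr_sumr linear_sum.
rewrite (eq_bigr (fun i : 'I_(size g) => g`_i * a (n + i))) => [|i _]; last first.
  by rewrite -scalerAr -exprD linearZ /= pairingXn.
apply: (sum_ord_widen0 (F := fun i => g`_i * a (n + i))) => // i le_gi.
by rewrite nth_default ?mul0r.
Qed.

Definition annihilates h := forall n, pairing ('X^n * h) = 0.

Lemma pairingM_annihilates g h : annihilates h -> pairing (g * h) = 0.
Proof.
move=> ann_h; rewrite -[g]coefK poly_def mulr_suml linear_sum big1 // => i _.
by rewrite -scalerAl linearZ /= ann_h mulr0.
Qed.

Lemma annihilates_mull g h : annihilates h -> annihilates (g * h).
Proof. by move=> ann_h n; rewrite mulrA pairingM_annihilates. Qed.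

Lemma annihilatesB g h : annihilates g -> annihilates h -> annihilates (g - h).
Proof. by move=> ann_g ann_h n; rewrite mulrBr linearB /= ann_g ann_h subrr. Qed.

Lemma annihilatesZ c h : annihilates h -> annihilates (c *: h).
Proof. by move=> ann_h n; rewrite -scalerAr linearZ /= ann_h mulr0. Qed.

(* Annihilators are closed under [%%], so one of minimal size divides them all. *)
Lemma annihilator_generator h : annihilates h -> h != 0 ->
  exists mu, [/\ annihilates mu, mu != 0 & forall g, annihilates g -> mu %| g].
Proof.
move=> ann_h; have [n le_hn] : exists n, (size h <= n)%N by exists (size h).
elim: n h le_hn ann_h => [|n IH] h le_hn ann_h h_neq0.
  by move: le_hn; rewrite leqn0 size_poly_eq0 (negbTE h_neq0).
have [[g [ann_g h_ndvd_g]] | gen_h] :=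
  classic (exists g, annihilates g /\ ~~ (h %| g)); last first.
  exists h; split=> // g ann_g; apply: contraT => h_ndvd_g.
  by case: gen_h; exists g.
apply: (IH (g %% h)); first by rewrite -ltnS (leq_trans _ le_hn) // ltn_modp.
  have -> : g %% h = g - g %/ h * h by rewrite {2}(divp_eq g h) addrC addKr.
  exact/annihilatesB/annihilates_mull.
by apply: contra h_ndvd_g => /eqP /modp_eq0P.
Qed.

Lemma annihilates_comp_Xn p lam h : lam != 0 -> (forall n, a (p * n)%N = lam * a n) ->
  annihilates (h \Po 'X^p) -> annihilates h.
Proof.
move=> lam_neq0 a_p ann_hp n; apply: (mulfI lam_neq0); rewrite mulr0 -(ann_hp (p * n)%N).
rewrite (pairingXnM _ (leqnn _)) mulr_sumr comp_polyE mulr_sumr linear_sum.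
apply: eq_bigr => i _; rewrite -scalerAr -exprM -exprD linearZ /= pairingXn.
by rewrite -mulnDr a_p mulrCA.
Qed.

End Annihilator.

Lemma common_unity_exponent (R : pzRingType) (s : seq R) :
  (forall x, x \in s -> exists2 m, (0 < m)%N & x ^+ m = 1) ->
  exists2 M, (0 < M)%N & forall x, x \in s -> x ^+ M = 1.
Proof.
elim: s => [|x s IH] unity_s; first by exists 1%N.
have [m m_gt0 xm1] := unity_s x (mem_head x s).
have [M M_gt0 sM1] : exists2 M, (0 < M)%N & forall y, y \in s -> y ^+ M = 1.
  by apply: IH => y s_y; apply: unity_s; rewrite inE s_y orbT.
exists (m * M)%N => [|y]; first by rewrite muln_gt0 m_gt0.
rewrite inE => /predU1P [->|/sM1 yM1]; first by rewrite exprM xm1 expr1n.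
by rewrite mulnC exprM yM1 expr1n.
Qed.

(* A finite set of nonzero elements that is contained in its image under every
   power map [y |-> y ^+ p] is stable under these maps, hence consists of roots
   of unity; a common exponent [M] then collapses the image under [y ^+ 2M] to 1. *)
Lemma pow_image_stable_eq1 (R : idomainType) (S : seq R) : 0 \notin S ->
  (forall p, (2 <= p)%N -> {subset S <= [seq y ^+ p | y <- S]}) ->
  forall x, x \in S -> x = 1.
Proof.
move=> S_neq0 S_pow.
have S_stable p x : (2 <= p)%N -> x \in S -> x ^+ p \in S.
  move=> p_ge2; rewrite -!(mem_undup S).
  have sub : {subset undup S <= [seq y ^+ p | y <- undup S]}.
    move=> y; rewrite mem_undup => /(S_pow p p_ge2) /mapP [z S_z ->].
    by apply: map_f; rewrite mem_undup.
  have [_ eqS] := uniq_min_size (undup_uniq S) sub (eq_leq (size_map _ _)).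
  by move=> S_x; rewrite eqS; apply: map_f.
have S_unity x : x \in S -> exists2 m, (0 < m)%N & x ^+ m = 1.
  move=> S_x; have x_neq0 : x != 0 by apply: contraNneq S_neq0 => <-.
  pose T := mkseq (fun i => x ^+ i.+1) (size S).+1.
  have /(uniqPn 0) [i [j [lt_ij lt_jT]]] : ~~ uniq T.
    apply/negP => /uniq_leq_size le_TS.
    suff /le_TS : {subset T <= S} by rewrite size_mkseq ltnn.
    by move=> _ /mapP [[|i] _ ->]; rewrite ?expr1 ?S_stable.
  rewrite size_mkseq in lt_jT; rewrite !nth_mkseq ?(ltn_trans lt_ij) // => xij.
  exists (j - i)%N; first by rewrite subn_gt0.
  apply: (mulfI (expf_neq0 i.+1 x_neq0)); rewrite -exprD mulr1 xij.
  by congr (x ^+ _); lia.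
have [M M_gt0 SM1] := common_unity_exponent S_unity.
move=> x /(S_pow (M * 2)%N) /mapP [|y S_y ->]; first lia.
by rewrite exprM SM1 ?expr1n.
Qed.

Lemma natr_roots_poly_eq0 (R : numDomainType) (P : {poly R}) :
  (forall n, P.[n%:R] = 0) -> P = 0.
Proof.
move=> P_nat; apply/eqP/negPn/negP => P_neq0.
suff : (size (mkseq (fun i => i%:R : R) (size P)) < size P)%N by rewrite size_mkseq ltnn.
apply: max_poly_roots P_neq0 _ _.
  by apply/allP => _ /mapP [i _ ->]; rewrite /root P_nat.
by rewrite map_inj_uniq ?iota_uniq // => i j /eqP; rewrite eqr_nat => /eqP.
Qed.

Lemma natr_prod_subn (R : pzRingType) n l :
  \prod_(j < l) (n%:R - j%:R) = (n ^_ l)%:R :> R.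
Proof.
elim: l => [|l IHl]; first by rewrite big_ord0 ffactn0.
rewrite big_ord_recr /= IHl ffactnSr natrM.
by case: (leqP l n) => [le_ln|lt_nl]; [rewrite natrB | rewrite ffact_small // !mul0r].
Qed.

Definition binomial_poly (R : numFieldType) l : {poly R} :=
  (l`!%:R)^-1 *: \prod_(j < l) ('X - (j%:R)%:P).

Lemma binomial_polyE (R : numFieldType) l n : (binomial_poly R l).[n%:R] = 'C(n, l)%:R.
Proof.
rewrite hornerZ horner_prod (eq_bigr (fun j : 'I_l => n%:R - j%:R)) => [|j _].
  by rewrite natr_prod_subn -bin_ffact natrM mulrC mulfK // pnatr_eq0 -lt0n fact_gt0.
by rewrite hornerXsubC.
Qed.

(* Newton's forward-difference formula: [a n = \sum_l 'C(n, l) (Delta^l a)_0]. *)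
Lemma annihilates_XsubC1_poly (R : numFieldType) (a : nat -> R) r :
  annihilates a (('X - 1) ^+ r) -> exists P : {poly R}, forall n, a n = P.[n%:R].
Proof.
move=> ann_r; pose d l := pairing a (('X - 1) ^+ l).
have d_r l : (r <= l)%N -> d l = 0.
  by move=> le_rl; rewrite /d -(subnK le_rl) exprD pairingM_annihilates.
exists (\sum_(l < r) d l *: binomial_poly R l) => n.
pose F l := d l *+ 'C(n, l).
have -> : a n = \sum_(l < n.+1) F l.
  rewrite -(pairingXn a n) -{1}(subrK 1 'X) exprD1n linear_sum.
  by apply: eq_bigr => l _; rewrite raddfMn.
rewrite horner_sum (eq_bigr (fun l : 'I_r => F l)) => [|l _]; last first.
  by rewrite hornerZ binomial_polyE mulr_natr.
rewrite (sum_ord_widen0 (M := n.+1 + r) (F := F)) ?leq_addr // => [|l lt_nl]; last first.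
  by rewrite /F bin_small.
symmetry; apply: sum_ord_widen0 => [|l /d_r d_l0]; first exact: leq_addl.
by rewrite /F d_l0 mul0rn.
Qed.

Lemma poly_dilation_monomial (R : numDomainType) (P : {poly R}) c :
  (forall n, P.[(2 * n)%:R] = c * P.[n%:R]) -> P = lead_coef P *: 'X^((size P).-1).
Proof.
move=> P_dil.
have P2 : \poly_(i < size P) (2%:R ^+ i * P`_i) - c *: P = 0.
  apply: natr_roots_poly_eq0 => n.
  apply/eqP; rewrite hornerD hornerN hornerZ horner_poly -P_dil natrM horner_coef subr_eq0.
  by apply/eqP/eq_bigr => i _; rewrite exprMn; ring.
have pow2 i : P`_i != 0 -> 2%:R ^+ i = c.
  move=> Pi_neq0; have /eqP := congr1 (fun q : {poly R} => q`_i) P2.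
  rewrite coefB coefZ coef_poly coef0; case: ltnP => [_|le_Pi]; last first.
    by move: Pi_neq0; rewrite nth_default ?eqxx.
  by rewrite -mulrBl mulf_eq0 (negbTE Pi_neq0) orbF subr_eq0 => /eqP.
apply/polyP => i; rewrite coefZ coefXn; case: eqVneq => [->|ne_ik].
  by rewrite mulr1 lead_coefE.
rewrite mulr0; apply: contraNeq ne_ik => Pi_neq0.
have P_neq0 : P != 0 by apply: contra_neq Pi_neq0 => ->; rewrite coef0.
have lead_neq0 : P`_(size P).-1 != 0 by rewrite -lead_coefE lead_coef_eq0.
by rewrite -(eqn_exp2l _ _ (ltnSn 1)) -(eqr_nat R) !natrX pow2 // pow2.
Qed.

Lemma dvdp_prod_XsubC_comp_Xn (R : idomainType) (rs : seq R) p :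
  \prod_(z <- rs) ('X - z%:P) %| (\prod_(z <- rs) ('X - (z ^+ p)%:P)) \Po 'X^p.
Proof.
elim: rs => [|z rs IH]; first by rewrite !big_nil comp_polyC dvdpp.
rewrite !big_cons comp_polyM dvdp_mul // comp_polyB comp_polyX comp_polyC.
by rewrite dvdp_XsubCl /root hornerD hornerN hornerXn hornerC subrr.
Qed.

Section DilationInvariantSeq.
Variables (C : numClosedFieldType) (a lam : nat -> C).
Hypothesis lam_neq0 : forall p, (2 <= p)%N -> lam p != 0.
Hypothesis a_dil : forall p, (2 <= p)%N -> forall n, a (p * n)%N = lam p * a n.

(* Every root [x] of the minimal annihilator [mu] is a [p]-th power of a root:
   [mu] divides [h \Po 'X^p] for [h] the polynomial with the [p]-th powers of
   the roots of [mu] as roots, so [h] is an annihilator and [mu] divides [h]. *)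
Lemma annihilator_XsubC1 Q : Q.[0] != 0 -> annihilates a Q ->
  exists r, annihilates a (('X - 1) ^+ r).
Proof.
move=> Q0 ann_Q; have Q_neq0 : Q != 0 by apply: contraNneq Q0 => ->; rewrite horner0.
have [mu [ann_mu mu_neq0 mu_gen]] := annihilator_generator ann_Q Q_neq0.
have lc_neq0 : lead_coef mu != 0 by rewrite lead_coef_eq0.
have [rs mu_rs] := closed_field_poly_normal mu.
have root_mu x : root mu x = (x \in rs) by rewrite mu_rs rootZ // root_prod_XsubC.
have rs_neq0 : 0 \notin rs.
  rewrite -root_mu; apply: contra Q0 => /eqP mu0.
  by have /dvdpP [q ->] := mu_gen Q ann_Q; rewrite hornerM mu0 mulr0.
have rs_pow p : (2 <= p)%N -> {subset rs <= [seq y ^+ p | y <- rs]}.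
  move=> p_ge2 x; rewrite -root_mu => mu_x.
  pose h := \prod_(z <- rs) ('X - (z ^+ p)%:P).
  have ann_h : annihilates a h.
    apply: (annihilates_comp_Xn (lam_neq0 p_ge2) (a_dil p_ge2)).
    have /dvdpP [q ->] : mu %| h \Po 'X^p.
      by rewrite {1}mu_rs dvdpZl // dvdp_prod_XsubC_comp_Xn.
    exact: annihilates_mull.
  have /dvdpP [q h_eq] := mu_gen h ann_h.
  have : root h x by rewrite h_eq rootM mu_x orbT.
  by rewrite /h -(big_map (fun z => z ^+ p) predT (fun w => 'X - w%:P)) root_prod_XsubC.
have rs1 := pow_image_stable_eq1 rs_neq0 rs_pow.
exists (size rs).
suff -> : ('X - 1) ^+ size rs = (lead_coef mu)^-1 *: mu by apply: annihilatesZ.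
rewrite {2}mu_rs scalerA mulVf // scale1r (eq_big_seq (fun=> 'X - 1)) => [|z /rs1 ->].
  by rewrite big_const_seq count_predT iter_mulr_1.
by rewrite polyC1.
Qed.

Theorem dilation_invariant_power Q : Q.[0] != 0 -> annihilates a Q ->
  exists k c, forall n, a n = c * n%:R ^+ k.
Proof.
move=> Q0 ann_Q; have [r ann_r] := annihilator_XsubC1 Q0 ann_Q.
have [P aP] := annihilates_XsubC1_poly ann_r.
have P_mono : P = lead_coef P *: 'X^((size P).-1).
  by apply: (@poly_dilation_monomial _ _ (lam 2)) => n; rewrite -!aP a_dil.
by exists (size P).-1, (lead_coef P) => n; rewrite aP {1}P_mono hornerZ hornerXn.
Qed.

End DilationInvariantSeq.

Lemma annihilates_map (F K : fieldType) (f : {rmorphism F -> K}) (a : nat -> F) h :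
  annihilates a h -> annihilates (f \o a) (map_poly f h).
Proof.
move=> ann_h n; transitivity (f (pairing a ('X^n * h))); last by rewrite ann_h rmorph0.
rewrite !(pairingXnM _ _ (leqnn _)) size_map_poly rmorph_sum; apply: eq_bigr => i _.
by rewrite coef_map rmorphM.
Qed.

(* Since [deg N < deg D], the expansion gives a linear recurrence for [s] whose
   characteristic polynomial is the reciprocal of [D]. *)
Lemma expands_annihilates (F : fieldType) (N D : {poly F}) s :
  expands N D s -> (size N < size D)%N ->
  annihilates s (\poly_(i < size D) D`_((size D).-1 - i)).
Proof.
move=> NDs lt_ND n; set d := (size D).-1.
have sD : size D = d.+1 by rewrite prednK // (leq_ltn_trans _ lt_ND).
rewrite (pairingXnM _ _ (size_poly _ _)); transitivity N`_(n + d); last first.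
  by rewrite nth_default // (leq_trans _ (leq_addl n d)) // -ltnS -sD.
rewrite NDs -(sum_ord_widen0 (m := size D) (M := (n + d).+1)
                               (F := fun i => D`_i * s (n + d - i)%N)).
- rewrite (reindex_inj rev_ord_inj); apply: eq_bigr => i _; rewrite coef_poly /=.
  have lt_iD := ltn_ord i.
  have -> : (size D - i.+1 = d - i)%N by lia.
  have -> : (d - (d - i) = i)%N by lia.
  have -> : (n + (d - i) = n + d - i)%N by lia.
  by rewrite ifT // (leq_ltn_trans (leq_subr i d)) // sD.
- by rewrite sD ltnS leq_addl.
- by move=> i le_Di; rewrite nth_default ?mul0r.
Qed.

Lemma real_dilation_invariant_power (R : realType) (a lam : nat -> R) Q :
  (forall p, (2 <= p)%N -> lam p != 0) ->
  (forall p, (2 <= p)%N -> forall n, a (p * n)%N = lam p * a n) ->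
  Q.[0] != 0 -> annihilates a Q -> exists k, forall n, a n = a 1%N * n%:R ^+ k.
Proof.
move=> lam_neq0 a_dil Q0 ann_Q.
have [k [c ac]] : exists k c, forall n, real_complex R (a n) = c * n%:R ^+ k.
  apply: (@dilation_invariant_power _ (real_complex R \o a) (real_complex R \o lam) _ _
                                    (map_poly (real_complex R) Q)).
  - by move=> p /lam_neq0; rewrite /= fmorph_eq0.
  - by move=> p /a_dil a_p n; rewrite /= a_p rmorphM.
  - by rewrite -(rmorph0 (real_complex R)) horner_map fmorph_eq0.
  - exact: annihilates_map.
exists k => n; apply: (@fmorph_inj _ _ (real_complex R)).
rewrite rmorphM rmorphXn rmorph_nat.
by have := ac n; have := ac 1%N; rewrite /= expr1n mulr1 => -> ->.
Qed.

Lemma cross_mul_dvdp_denom (F : fieldType) (A B N D : {poly F}) :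
  A != 0 -> A * D = N * B -> B %/ gcdp A B %| D.
Proof.
move=> A_neq0 ADNB; set g := gcdp A B.
have g_neq0 : g != 0 by rewrite gcdp_eq0 negb_and A_neq0.
have cop : coprimep (B %/ g) (A %/ g) by rewrite coprimep_sym coprimep_div_gcd ?A_neq0.
rewrite -(Gauss_dvdpr _ cop).
have -> : A %/ g * D = N * (B %/ g).
  apply: (mulIf g_neq0); rewrite mulrAC divpK ?dvdp_gcdl // ADNB -mulrA divpK //.
  exact: dvdp_gcdr.
exact: dvdp_mull.
Qed.

Section Taylor.
Variable R : realType.
Implicit Types A B : {poly R}.

Lemma size_taylor_seq A B n : size (taylor_seq A B n) = n.+1.
Proof. by elim: n => [|n IHn] //=; rewrite size_rcons IHn. Qed.

Lemma nth_taylor_seq A B n i : (i <= n)%N -> (taylor_seq A B n)`_i = taylor A B i.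
Proof.
elim: n => [|n IHn]; first by rewrite leqn0 => /eqP ->.
rewrite leq_eqVlt => /predU1P [-> //|lt_in].
by rewrite /= nth_rcons size_taylor_seq lt_in IHn.
Qed.

Lemma taylorS A B n : taylor A B n.+1 =
  (A`_n.+1 - \sum_(i < n.+1) B`_(n.+1 - i) * taylor A B i) / B`_0.
Proof.
rewrite {1}/taylor /= nth_rcons size_taylor_seq ltnn eqxx.
by congr ((_ - _) / _); apply: eq_bigr => i _; rewrite nth_taylor_seq // -ltnS.
Qed.

Lemma taylor_expands A B : B`_0 != 0 -> expands A B (taylor A B).
Proof.
move=> B0 [|n]; first by rewrite big_ord1 /taylor /= mulrC divfK.
rewrite big_ord_recl subn0 taylorS mulrC divfK // (reindex_inj rev_ord_inj) /=.
rewrite [X in _ - X + _](eq_bigr (fun i : 'I_n.+1 =>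
  B`_(bump 0 i) * taylor A B (n.+1 - bump 0 i))) ?subrK // => i _.
have lt_in := ltn_ord i; rewrite /bump /=.
have -> : (n.+1 - (n.+1 - i.+1) = 1 + i)%N by lia.
by have -> : (n.+1 - i.+1 = n.+1 - (1 + i))%N by lia.
Qed.

Lemma theta_geom_expands k :
  expands (theta_geom R k).1 (theta_geom R k).2 (fun n => n%:R ^+ k).
Proof.
elim: k => [|k IHk]; rewrite /theta_geom /=.
  by refine (eq_expands (expands_geom R) _) => n; rewrite expr0.
by refine (eq_expands (expands_Xderiv IHk) _) => n; rewrite exprS.
Qed.

Lemma theta_geom_denom k : (theta_geom R k).2 = (1 - 'X) ^+ (2 ^ k).
Proof. by elim: k => [|k IHk]; rewrite ?expr1 //= IHk -exprM expnSr. Qed.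

Lemma is_pole_cross A B N D z : A != 0 -> A * D = N * B ->
  is_pole A B z -> root (map_poly (real_complex R) D) z.
Proof.
move=> A_neq0 ADNB; have /dvdpP [q ->] := cross_mul_dvdp_denom A_neq0 ADNB.
by rewrite /is_pole rmorphM rootM => ->; rewrite orbT.
Qed.

End Taylor.

Theorem mainTheorem3 (R : realType) (A B : {poly R}) (lambda : nat -> R) :
  B.[0] != 0 -> (size A < size B)%N -> A != 0 ->
  (forall p : nat, (2 <= p)%N ->
     lambda p != 0 /\ forall n : nat, taylor A B (p * n) = lambda p * taylor A B n) ->
  (forall z : R[i], is_pole A B z -> z = 1) /\
  exists (k : nat) (C : R),
    A * (theta_geom R k).2 = C *: ((theta_geom R k).1 * B) /\
    forall p : nat, (2 <= p)%N -> lambda p = (p ^ k)%:R.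
Proof.
move=> B0 lt_AB A_neq0 dil.
have tAB : expands A B (taylor A B) by apply: taylor_expands; rewrite -horner_coef0.
have B_neq0 : B != 0 by apply: contraNneq B0 => ->; rewrite horner0.
have [k tk] : exists k, forall n, taylor A B n = taylor A B 1%N * n%:R ^+ k.
  apply: (real_dilation_invariant_power (fun p hp => (dil p hp).1) (fun p hp => (dil p hp).2)
                                         _ (expands_annihilates tAB lt_AB)).
  by rewrite horner_coef0 coef_poly size_poly_gt0 B_neq0 subn0 -lead_coefE lead_coef_eq0.
set c := taylor A B 1%N in tk.
have c_neq0 : c != 0.
  apply: contraNneq A_neq0 => c0; apply/eqP/polyP => n; rewrite tAB coef0 big1 // => i _.
  by rewrite tk c0 mul0r mulr0.
have cross : A * (theta_geom R k).2 = (c *: (theta_geom R k).1) * B.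
  exact: expands_cross (eq_expands tAB tk) (expandsZ c (theta_geom_expands R k)).
split=> [z /(is_pole_cross A_neq0 cross)|].
  rewrite theta_geom_denom rmorphXn rmorphB rmorph1 /= map_polyX rootE !hornerE.
  by rewrite expf_eq0 subr_eq0 => /andP [_ /eqP <-].
exists k, c; split=> [|p p_ge2]; first by rewrite cross scalerAl.
apply: (mulIf c_neq0); have := (dil p p_ge2).2 1%N.
by rewrite muln1 tk -/c => <-; rewrite mulrC natrX.
Qed.
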